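(* Let $p\ge5$ be a prime. Then \[ \sum_{j=2}^{p-3}B_j\equiv-\frac32\pmod p . \]
   Context: $B_j$ is the $j$th Bernoulli number ($\frac{t}{e^t-1}=\sum_{m\ge0}B_m\frac{t^m}{m!}$). For rationals whose denominators are coprime to $p$, $a\equiv b\pmod p$ means $a-b$ is $p$ times a rational with denominator coprime to $p$. *)

From mathcomp Require Import all_boot all_order all_algebra.
Set Implicit Arguments. Unset Strict Implicit. Unset Printing Implicit Defensive.
Import Order.TTheory GRing.Theory Num.Theory.
Local Open Scope ring_scope.

(* Bernoulli numbers B_m with generating function t/(e^t-1) (so B_1 = -1/2),
   defined by the equivalent standard recurrence
   B_0 = 1, sum_{k=0}^{m} C(m+1,k) B_k = 0 for m >= 1. *)
Fixpoint bern_seq (n : nat) : seq rat :=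
  match n with
  | 0%N => [:: 1]
  | m.+1 =>
      let s := bern_seq m in
      rcons s (- ((m.+2)%:R)^-1 *
                 \sum_(k < m.+1) ('C(m.+2, k))%:R * nth 0 s k)
  end.

Definition bernoulli (m : nat) : rat := nth 0 (bern_seq m) m.

Definition rat_congr (p : nat) (a b : rat) : Prop :=
  exists r : rat, coprime `|denq r|%N p /\ a - b = p%:R * r.

From mathcomp Require Import all_boot all_order all_algebra.
From mathcomp Require Import ring zify.
Set Implicit Arguments.
Unset Strict Implicit.

Import Order.TTheory GRing.Theory Num.Theory.
Local Open Scope ring_scope.

(* Summing the defining recurrence of the Bernoulli numbers gives
     sum_(k <= m) C(m+2, k+1) B_k = sum_(k <= m) B_k + 1.
   For m = p - 2 every C(p, k+1) is divisible by p, and B_0, ..., B_(p-2) are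
   p-integral since their recurrence only divides by 2, ..., p - 1; hence
   sum_(k <= p-2) B_k = -1 (mod p).  Removing B_0 + B_1 = 1/2 and B_(p-2) = 0
   leaves -3/2.  The vanishing of B_n for odd n > 1 is read off the identity
   B(-t) = B(t) + t for the exponential generating function B(t) = t/(e^t - 1),
   which is checked on polynomial truncations modulo X^N. *)

Lemma size_bern_seq n : size (bern_seq n) = n.+1.
Proof. by elim: n => //= n IHn; rewrite size_rcons IHn. Qed.

Lemma nth_bern_seq n k : (k <= n)%N -> nth 0 (bern_seq n) k = bernoulli k.
Proof.
elim: n => [|n IHn]; first by rewrite leqn0 => /eqP ->.
rewrite leq_eqVlt => /orP [/eqP -> // | ltkn].
by rewrite /= nth_rcons size_bern_seq ltkn IHn.
Qed.

Lemma bernoulliS m : bernoulli m.+1 =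
  - (m.+2)%:R^-1 * \sum_(k < m.+1) 'C(m.+2, k)%:R * bernoulli k.
Proof.
rewrite /bernoulli /= nth_rcons size_bern_seq ltnn eqxx.
by congr (_ * _); apply: eq_bigr => k _; rewrite nth_bern_seq // -ltnS.
Qed.

Lemma sum_bin_bernoulli m : \sum_(k < m.+2) 'C(m.+2, k)%:R * bernoulli k = 0.
Proof.
rewrite big_ord_recr /= bernoulliS binSn mulrA mulrN mulfV ?pnatr_eq0 //.
by rewrite mulN1r addrN.
Qed.

Lemma bernoulli0 : bernoulli 0 = 1. Proof. by []. Qed.

Lemma bernoulli1 : bernoulli 1 = - 2%:R^-1.
Proof. by rewrite bernoulliS big_ord1 bernoulli0 mulr1. Qed.

Lemma sum_binS_bernoulli m :
  \sum_(k < m.+1) 'C(m.+2, k.+1)%:R * bernoulli k =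
  \sum_(k < m.+1) bernoulli k + 1.
Proof.
elim: m => [|m IHm]; first by rewrite !big_ord1 bernoulli0.
under eq_bigr do rewrite binS natrD mulrDl.
rewrite big_split /= sum_bin_bernoulli addr0 big_ord_recr /= IHm binn mul1r.
by rewrite [in RHS]big_ord_recr /= addrAC.
Qed.

Lemma alternating_sum_binS (R : comNzRingType) n :
  \sum_(j < n.+1) (-1) ^+ j * 'C(n.+1, j.+1)%:R = 1 :> R.
Proof.
have := exprBn (1 : R) 1 n.+1.
rewrite subrr expr0n big_ord_recl /= expr0 !expr1n !mulr1 mulr1n.
under eq_bigr do rewrite !expr1n !mulr1.
move=> sum0.
transitivity (- \sum_(i < n.+1) (-1) ^+ bump 0 i *+ 'C(n.+1, bump 0 i) : R).
  rewrite -sumrN; apply: eq_bigr => j _.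
  by rewrite /bump /= exprS mulN1r mulNrn opprK mulr_natr.
by apply/eqP; rewrite eq_sym -addr_eq0 -sum0.
Qed.

Lemma bin_div_fact (R : numFieldType) n j : (j <= n)%N ->
  'C(n, j)%:R / n`!%:R = (j`!%:R)^-1 * ((n - j)`!%:R)^-1 :> R.
Proof.
move=> le_jn; rewrite -(bin_fact le_jn) !natrM.
have nz_fact k : k`!%:R != 0 :> R by rewrite pnatr_eq0 -lt0n fact_gt0.
have nz_bin : 'C(n, j)%:R != 0 :> R by rewrite pnatr_eq0 -lt0n bin_gt0.
by field; rewrite !nz_fact nz_bin.
Qed.

Lemma coef_comp_poly_oppX (R : comNzRingType) (p : {poly R}) i :
  (p \Po - 'X)`_i = (-1) ^+ i * p`_i.
Proof.
elim/poly_ind: p i => [|p c IHp] i; first by rewrite comp_poly0 !coef0 mulr0.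
rewrite comp_poly_MXaddC mulrN !coefD coefN !coefMX coefC.
case: i => [|i] /=; first by rewrite oppr0 mul1r.
by rewrite IHp !addr0 exprS mulN1r mulNr.
Qed.

Lemma dvdXnP (R : fieldType) (N : nat) (p : {poly R}) :
  reflect (forall i, (i < N)%N -> p`_i = 0) ('X^N %| p).
Proof.
apply: (iffP idP) => [/dvdpP [q ->] i iN | p0].
  by rewrite coefMXn iN.
rewrite -(poly_take_drop N p).
have -> : take_poly N p = 0.
  by apply/polyP => i; rewrite coef_take_poly coef0; case: ifP => // /p0.
by rewrite add0r dvdp_mull.
Qed.

Lemma dvdXn_comp_oppX (R : fieldType) (N : nat) (p : {poly R}) :
  'X^N %| p -> 'X^N %| p \Po - 'X.
Proof.
move=> /dvdXnP p0; apply/dvdXnP => i iN.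
by rewrite coef_comp_poly_oppX p0 ?mulr0.
Qed.

Lemma comp_poly_oppX_poly (R : comNzRingType) N (a : nat -> R) :
  \poly_(i < N) a i \Po - 'X = \poly_(i < N) ((-1) ^+ i * a i).
Proof.
apply/polyP => i; rewrite coef_comp_poly_oppX !coef_poly.
by case: ifP; rewrite ?mulr0.
Qed.

Lemma coefM_poly (R : nzSemiRingType) N (a b : nat -> R) i : (i < N)%N ->
  (\poly_(k < N) a k * \poly_(k < N) b k)`_i =
  \sum_(j < i.+1) a j * b (i - j)%N.
Proof.
move=> ltiN; rewrite coefM; apply: eq_bigr => -[j /= ltji] _.
have le_ji : (j <= i)%N by rewrite -ltnS.
by rewrite !coef_poly (leq_ltn_trans le_ji ltiN) (leq_ltn_trans (leq_subr j i)).
Qed.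

Definition bernoulli_egf N : {poly rat} := \poly_(i < N) (bernoulli i / i`!%:R).
Definition exp_poly N : {poly rat} := \poly_(i < N) (i`!%:R)^-1.
Definition expm1_divX N : {poly rat} := \poly_(i < N) ((i.+1)`!%:R)^-1.

Lemma bernoulli_egf_expm1 N : 'X^N %| bernoulli_egf N * expm1_divX N - 1.
Proof.
apply/dvdXnP => i ltiN; rewrite coefB coef1 coefM_poly //.
transitivity (((i.+1)`!%:R)^-1 * \sum_(j < i.+1) 'C(i.+1, j)%:R * bernoulli j
               - (i == 0%N)%:R).
  congr (_ - _); rewrite mulr_sumr; apply: eq_bigr => -[j /= ltji] _.
  have := bin_div_fact rat (ltnW ltji); rewrite subSn // => e.
  by rewrite mulrA (mulrC _ 'C(_, _)%:R) e; ring.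
case: i ltiN => [|m] _ /=.
  by rewrite big_ord1 bernoulli0 invr1 !mul1r subrr.
by rewrite sum_bin_bernoulli mulr0 subr0.
Qed.

Lemma expm1_divX_reflect N :
  'X^N %| (expm1_divX N \Po - 'X) * exp_poly N - expm1_divX N.
Proof.
apply/dvdXnP => i ltiN.
rewrite comp_poly_oppX_poly coefB coefM_poly // coef_poly ltiN.
transitivity (((i.+1)`!%:R)^-1 * \sum_(j < i.+1) (-1) ^+ j * 'C(i.+1, j.+1)%:R
               - ((i.+1)`!%:R)^-1 : rat).
  congr (_ - _); rewrite mulr_sumr; apply: eq_bigr => -[j /= ltji] _.
  have := bin_div_fact rat ltji; rewrite subSS => e.
  by rewrite mulrCA (mulrC _ 'C(_, _)%:R) e; ring.
by rewrite alternating_sum_binS mulr1 subrr.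
Qed.

Lemma exp_poly_expm1 N : 'X^N %| exp_poly N - (1 + 'X * expm1_divX N).
Proof.
apply/dvdXnP => i ltiN; rewrite coefB coefD coef1 coefXM !coef_poly ltiN.
case: i ltiN => [|i] /= ltiN; first by rewrite invr1 addr0 subrr.
by rewrite ltnW // add0r subrr.
Qed.

Lemma bernoulli_egf_reflect N :
  'X^N %| (bernoulli_egf N \Po - 'X) - bernoulli_egf N - 'X.
Proof.
set B := bernoulli_egf N; set E := expm1_divX N; set ex := exp_poly N.
set Bm := B \Po - 'X; set Em := E \Po - 'X.
have BE : 'X^N %| B * E - 1 := bernoulli_egf_expm1 N.
have EmE : 'X^N %| Em * ex - E := expm1_divX_reflect N.
have ex_expm1 : 'X^N %| ex - (1 + 'X * E) := exp_poly_expm1 N.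
have BmEm : 'X^N %| Bm * Em - 1.
  by rewrite -[1](comp_polyC 1 (- 'X)) -comp_polyM -comp_polyB dvdXn_comp_oppX.
(* B(-t) = B(-t) E(t) B(t) = B(-t) E(-t) e^t B(t) = e^t B(t)
          = B(t) + t E(t) B(t) = B(t) + t. *)
have -> : Bm - B - 'X = - (Bm * (B * E - 1)) - Bm * (Em * ex - E) * B
    + (Bm * Em - 1) * ex * B + (ex - (1 + 'X * E)) * B + 'X * (B * E - 1).
  by ring.
apply: dvdp_add; last exact: dvdp_mull.
apply: dvdp_add; last exact: dvdp_mulr.
apply: dvdp_add; last exact/dvdp_mulr/dvdp_mulr.
apply: dvdp_sub; last exact/dvdp_mulr/dvdp_mull.
by rewrite dvdpNr dvdp_mull.
Qed.

Lemma bernoulli_odd n : odd n -> (1 < n)%N -> bernoulli n = 0.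
Proof.
move=> odd_n lt1n; have /dvdXnP/(_ n (ltnSn n)) := bernoulli_egf_reflect n.+1.
rewrite !coefB coef_comp_poly_oppX coefX !coef_poly ltnSn -signr_odd odd_n.
rewrite gtn_eqF // subr0 mulN1r -opprD -mulr2n => /eqP.
rewrite oppr_eq0 mulrn_eq0 /= mulf_eq0 invr_eq0 pnatr_eq0 eqn0Ngt fact_gt0.
by rewrite orbF => /eqP.
Qed.

Definition p_integral (p : nat) (r : rat) :=
  exists d : nat,
    [/\ (0 < d)%N, coprime d p & exists a : int, r * d%:R = a%:~R].

Lemma p_integral_nat p n : p_integral p n%:R.
Proof.
by exists 1%N; split; rewrite ?coprime1n //; exists n; rewrite mulr1.
Qed.

Lemma p_integralD p r s :
  p_integral p r -> p_integral p s -> p_integral p (r + s).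
Proof.
move=> [d1 [d1_gt0 d1p [a1 e1]]] [d2 [d2_gt0 d2p [a2 e2]]].
exists (d1 * d2)%N; split; rewrite ?muln_gt0 ?d1_gt0 ?coprimeMl ?d1p //.
exists (a1 * d2%:Z + a2 * d1%:Z); rewrite natrM intrD !intrM -e1 -e2 !pmulrn.
by ring.
Qed.

Lemma p_integralM p r s :
  p_integral p r -> p_integral p s -> p_integral p (r * s).
Proof.
move=> [d1 [d1_gt0 d1p [a1 e1]]] [d2 [d2_gt0 d2p [a2 e2]]].
exists (d1 * d2)%N; split; rewrite ?muln_gt0 ?d1_gt0 ?coprimeMl ?d1p //.
by exists (a1 * a2); rewrite natrM intrM -e1 -e2; ring.
Qed.

Lemma p_integralN p r : p_integral p r -> p_integral p (- r).
Proof.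
move=> [d [d_gt0 dp [a e]]]; exists d; split => //.
by exists (- a); rewrite mulNr e intrN.
Qed.

Lemma p_integralV p n : (0 < n)%N -> coprime n p -> p_integral p n%:R^-1.
Proof.
move=> n_gt0 np; exists n; split => //; exists 1.
by rewrite mulVf // pnatr_eq0 -lt0n.
Qed.

Lemma p_integral_sum p m (F : 'I_m -> rat) :
  (forall k, p_integral p (F k)) -> p_integral p (\sum_(k < m) F k).
Proof.
move=> F_int; apply: (big_ind (p_integral p)) => //.
  exact: (p_integral_nat p 0).
exact: p_integralD.
Qed.

Lemma coprime_denq p r : p_integral p r -> coprime `|denq r| p.
Proof.
move=> [d [d_gt0 dp [a e]]]; apply: coprime_dvdl dp.
have num_den : numq r * d%:Z = a * denq r.
  by apply: (@intr_inj rat); rewrite !intrM numqE -e; ring.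
have : (`|denq r| %| `|numq r| * d)%N.
  by rewrite -[d]/(`|d%:Z|%N) -abszM num_den abszM dvdn_mull.
by rewrite Gauss_dvdr // coprime_sym coprime_num_den.
Qed.

Lemma p_integral_bernoulli p k : prime p -> (k.+2 <= p)%N ->
  p_integral p (bernoulli k).
Proof.
move=> p_prime; elim/ltn_ind: k => -[_ _ | m IHm lt_m2_p].
  exact: (p_integral_nat p 1).
have coprime_m2_p : coprime m.+2 p.
  by rewrite coprime_sym prime_coprime // gtnNdvd.
rewrite bernoulliS; apply: p_integralM.
  exact/p_integralN/p_integralV.
apply: p_integral_sum => k; apply: p_integralM; first exact: p_integral_nat.
by apply: IHm; have := ltn_ord k; lia.
Qed.

Lemma rat_congrDr p a b c : rat_congr p a b -> rat_congr p (a + c) (b + c).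
Proof. by move=> [r [r_den e]]; exists r; rewrite [b + c]addrC addrKA. Qed.

Lemma sum_bernoulli_congr p : prime p ->
  rat_congr p (\sum_(k < p.-1) bernoulli k) (-1).
Proof.
move=> p_prime; have [m p_eq] : exists m, p = m.+2.
  by exists (p - 2)%N; have := prime_gt1 p_prime; lia.
rewrite p_eq in p_prime *.
exists (\sum_(k < m.+1) ('C(m.+2, k.+1) %/ m.+2)%:R * bernoulli k); split.
  apply/coprime_denq/p_integral_sum => k; apply: p_integralM.
    exact: p_integral_nat.
  by apply: p_integral_bernoulli => //; have := ltn_ord k; lia.
rewrite /= opprK -sum_binS_bernoulli mulr_sumr; apply: eq_bigr => k _.
rewrite mulrA -natrM mulnC divnK // prime_dvd_bin //=.
by rewrite ltnS ltn_ord.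
Qed.

Theorem mainTheorem15 (p : nat) (hp : prime p) (hp5 : (5 <= p)%N) :
  rat_congr p (\sum_(2 <= j < p - 2) bernoulli j) (- (3%:R / 2%:R)).
Proof.
have [m p_eq] : exists m, p = m.+2 by exists (p - 2)%N; lia.
have odd_m : odd m.
  by case: (even_prime hp); rewrite p_eq //= ?negbK; lia.
have sum_split : \sum_(k < p.-1) bernoulli k =
    bernoulli 0 + bernoulli 1 + \sum_(2 <= j < p - 2) bernoulli j.
  rewrite p_eq /= subn2 /= big_ord_recr /= bernoulli_odd //; last by lia.
  rewrite addr0 -(big_mkord xpredT) (big_cat_nat _ (n := 2)) //; last by lia.
  by rewrite big_nat_recl // big_nat1.
have := rat_congrDr (- (bernoulli 0 + bernoulli 1)) (sum_bernoulli_congr hp).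
rewrite sum_split addrAC subrr add0r bernoulli0 bernoulli1.
by congr rat_congr; field.
Qed.
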